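(* Let $A\in\mathbb{C}^{p\times p}$ and $C\in\mathbb{C}^{q\times q}$ be Hermitian positive semidefinite, $B\in\mathbb{C}^{p\times q}$, and $H=\begin{bmatrix} A & B\\ B^* & -C\end{bmatrix}$. Decompose $\mathbb{C}^p=\mathcal{R}(A)\oplus\mathcal{N}(A)$ and $\mathbb{C}^q=\mathcal{R}(C)\oplus\mathcal{N}(C)$ (orthogonal decompositions into range and null-space). Let $A_1$ be the restriction of $A$ to $\mathcal{R}(A)$ and $C_1$ the restriction of $C$ to $\mathcal{R}(C)$ (these are positive definite), and write $B$ in block form with respect to these decompositions, \[ B=\begin{bmatrix} B_{11} & B_{12}\\ B_{21} & B_{22}\end{bmatrix}, \] where $B_{11}:\mathcal{R}(C)\to\mathcal{R}(A)$, $B_{12}:\mathcal{N}(C)\to\mathcal{R}(A)$, $B_{21}:\mathcal{R}(C)\to\mathcal{N}(A)$, $B_{22}:\mathcal{N}(C)\to\mathcal{N}(A)$ are the corresponding compressions of $B$. Assume that $\dim\mathcal{N}(A)=\dim\mathcal{N}(C)$ and that $B_{22}$ is nonsingular. Then $(-\epsilon,\epsilon)\cap\sigma(H)=\emptyset$, where \[ \epsilon=\frac{1}{\bigl(1+\max\{\|B_{12}B_{22}^{-1}\|,\ \|B_{21}^*B_{22}^{-*}\|\}\bigr)^2\ \max\{\|A_1^{-1}\|,\ \|C_1^{-1}\|,\ \|B_{22}^{-1}\|\}}. \]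
   Context: $\mathcal{R}$ and $\mathcal{N}$ denote range and null-space, $\sigma$ the spectrum, $\|\cdot\|$ the spectral norm, and $B_{22}^{-*}=(B_{22}^{-1})^*$. *)

From HB Require Import structures.
From mathcomp Require Import all_boot all_order all_algebra.
From mathcomp Require Import boolp classical_sets reals.
From mathcomp Require Import complex.
Set Implicit Arguments. Unset Strict Implicit. Unset Printing Implicit Defensive.
Import Order.TTheory GRing.Theory Num.Theory.
Local Open Scope ring_scope.

Definition ctrmx (R : rcfType) (m n : nat) (M : 'M[R[i]]_(m, n)) : 'M[R[i]]_(n, m) :=
  (map_mx (fun z : R[i] => z^*) M)^T.

(* Hermitian positive semidefinite: M^* = M and x^* M x >= 0 for all x
   (the order on R[i] means "real and nonnegative"). *)
Definition hpsd (R : rcfType) (n : nat) (M : 'M[R[i]]_n) : Prop :=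
  ctrmx M = M /\ forall x : 'cV[R[i]]_n, 0 <= (ctrmx x *m M *m x) ord0 ord0.

Definition vnorm (R : rcfType) (n : nat) (x : 'cV[R[i]]_n) : R :=
  Num.sqrt (\sum_(k < n) (ComplexField.Normc.normc (x k ord0)) ^+ 2).

(* Spectral (operator 2-)norm: sup of ||M x|| over unit vectors x
   (equal to 0 for matrices with no columns, sup of the empty set). *)
Definition specnorm (R : realType) (m n : nat) (M : 'M[R[i]]_(m, n)) : R :=
  sup [set vnorm (M *m x) | x in [set x : 'cV[R[i]]_n | vnorm x = 1]].

From HB Require Import structures.
From mathcomp Require Import all_boot all_order all_algebra.
From mathcomp Require Import boolp classical_sets reals.
From mathcomp Require Import complex.
From mathcomp Require Import ring lra.
Set Implicit Arguments. Unset Strict Implicit. Unset Printing Implicit Defensive.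
Import Order.TTheory GRing.Theory Num.Theory.
Local Open Scope ring_scope.

(* Let H w = x w with w <> 0 and x real. In the coordinates a, b, c, d of w
   along U1, U2, V1, V2 the equation splits into four block equations.
   Eliminating B12 and B21^* with X = B12 B22^-1 and Y = B21^* B22^-* leaves
   the saddle system [A1 T; T^* -C1] (a; c) = x (a - X b; c - Y d), whose
   real energy a^* A1 a + c^* C1 c is at most |x| (|a| |a - X b| + |c| |c - Y d|),
   and B22^* (b + X^* a) = x d, B22 (d + Y^* c) = x b. Positive definiteness of
   A1, C1 bounds |a|^2 + |c|^2 by that energy; chaining the estimates gives
   |(a, c, b + X^* a, d + Y^* c)|^2 <= rho^2 |(a, c, b + X^* a, d + Y^* c)|^2
   with rho = |x| alpha (1 + gamma)^2 < 1, where alpha and gamma are the two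
   maxima in eps; so all coordinates vanish. *)

Section InnerProduct.
Variable R : rcfType.
Local Notation C := R[i].
Local Notation normc := (@ComplexField.Normc.normc R).

Definition dot n (x y : 'cV[C]_n) : C := \sum_k (x k ord0)^* * y k ord0.

Lemma dotE n (x y : 'cV[C]_n) : (ctrmx x *m y) ord0 ord0 = dot x y.
Proof. by rewrite mxE; apply: eq_bigr => k _; rewrite !mxE. Qed.

Lemma ctrmx_mul m n p (M : 'M[C]_(m, n)) (N : 'M[C]_(n, p)) :
  ctrmx (M *m N) = ctrmx N *m ctrmx M.
Proof. by rewrite /ctrmx map_mxM trmx_mul. Qed.

Lemma ctrmxK m n (M : 'M[C]_(m, n)) : ctrmx (ctrmx M) = M.
Proof. by apply/matrixP => i j; rewrite !mxE conjCK. Qed.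

Lemma ctrmxD m n (M N : 'M[C]_(m, n)) : ctrmx (M + N) = ctrmx M + ctrmx N.
Proof. by apply/matrixP => i j; rewrite !mxE rmorphD. Qed.

Lemma ctrmxN m n (M : 'M[C]_(m, n)) : ctrmx (- M) = - ctrmx M.
Proof. by apply/matrixP => i j; rewrite !mxE rmorphN. Qed.

Lemma ctrmxZ m n a (M : 'M[C]_(m, n)) : ctrmx (a *: M) = a^* *: ctrmx M.
Proof. by apply/matrixP => i j; rewrite !mxE rmorphM. Qed.

Lemma ctrmx0 m n : ctrmx (0 : 'M[C]_(m, n)) = 0.
Proof. by apply/matrixP => i j; rewrite !mxE conjC0. Qed.

Lemma ctrmx1 n : ctrmx (1%:M : 'M[C]_n) = 1%:M.
Proof. by rewrite /ctrmx map_mx1 trmx1. Qed.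

Lemma ctrmx_inv n (M : 'M[C]_n) : ctrmx (invmx M) = invmx (ctrmx M).
Proof. by rewrite /ctrmx map_invmx trmx_inv. Qed.

Lemma ctrmx_unit n (M : 'M[C]_n) : (ctrmx M \in unitmx) = (M \in unitmx).
Proof. by rewrite /ctrmx unitmx_tr map_unitmx. Qed.

Lemma ctrmx_row_mx p r m (U1 : 'M[C]_(p, r)) (U2 : 'M[C]_(p, m)) :
  ctrmx (row_mx U1 U2) = col_mx (ctrmx U1) (ctrmx U2).
Proof. by rewrite /ctrmx map_row_mx tr_row_mx. Qed.

Lemma ctrmx_block_mx m1 m2 n1 n2 (a : 'M[C]_(m1, n1)) (b : 'M[C]_(m1, n2))
    (c : 'M[C]_(m2, n1)) (d : 'M[C]_(m2, n2)) :
  ctrmx (block_mx a b c d) = block_mx (ctrmx a) (ctrmx c) (ctrmx b) (ctrmx d).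
Proof. by rewrite /ctrmx map_block_mx tr_block_mx. Qed.

Lemma conj_real (r : R) : (r%:C)%C^* = (r%:C)%C.
Proof. by apply: conj_Creal; rewrite complex_real. Qed.

Lemma conj_ge0 (z : C) : 0 <= z -> z^* = z.
Proof. by move=> z0; rewrite conj_Creal // ger0_real. Qed.

Lemma dotDl n (x y z : 'cV[C]_n) : dot (x + y) z = dot x z + dot y z.
Proof. by rewrite /dot -big_split; apply: eq_bigr => k _; rewrite !mxE rmorphD mulrDl. Qed.

Lemma dotDr n (x y z : 'cV[C]_n) : dot x (y + z) = dot x y + dot x z.
Proof. by rewrite /dot -big_split; apply: eq_bigr => k _; rewrite !mxE mulrDr. Qed.

Lemma dotZl n a (x y : 'cV[C]_n) : dot (a *: x) y = a^* * dot x y.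
Proof. by rewrite /dot big_distrr; apply: eq_bigr => k _; rewrite !mxE rmorphM -mulrA. Qed.

Lemma dotZr n a (x y : 'cV[C]_n) : dot x (a *: y) = a * dot x y.
Proof. by rewrite /dot big_distrr; apply: eq_bigr => k _; rewrite !mxE mulrCA. Qed.

Lemma dotNr n (x y : 'cV[C]_n) : dot x (- y) = - dot x y.
Proof. by rewrite -scaleN1r dotZr mulN1r. Qed.

Lemma dotC n (x y : 'cV[C]_n) : dot y x = (dot x y)^*.
Proof. by rewrite /dot rmorph_sum; apply: eq_bigr => k _; rewrite rmorphM /= conjCK mulrC. Qed.

Lemma dot_mulmxr m n (M : 'M[C]_(m, n)) (x : 'cV[C]_m) (y : 'cV[C]_n) :
  dot x (M *m y) = dot (ctrmx M *m x) y.
Proof. by rewrite -!dotE ctrmx_mul ctrmxK mulmxA. Qed.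

Lemma hpsd_dot_ge0 n (M : 'M[C]_n) x : hpsd M -> 0 <= dot x (M *m x).
Proof. by case=> _ /(_ x); rewrite -mulmxA dotE. Qed.

Lemma hpsd1 n : hpsd (1%:M : 'M[C]_n).
Proof.
split=> [|x]; first exact: ctrmx1.
by rewrite mulmx1 dotE /dot sumr_ge0 // => k _; rewrite mulrC -normCK exprn_ge0.
Qed.

Lemma normcE (z : C) : `|z| = ((normc z)%:C)%C.
Proof. by []. Qed.

Lemma sqr_vnormC n (x : 'cV[C]_n) : ((vnorm x ^+ 2)%:C)%C = dot x x.
Proof.
rewrite sqr_sqrtr ?sumr_ge0 // => [|k _]; last exact: sqr_ge0.
rewrite rmorph_sum; apply: eq_bigr => k _.
by rewrite rmorphXn /= -normcE normCK mulrC.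
Qed.

Lemma vnorm_ge0 n (x : 'cV[C]_n) : 0 <= vnorm x.
Proof. exact: sqrtr_ge0. Qed.

Lemma normc_ge0 (z : C) : 0 <= normc z.
Proof. by case: z => a b; apply: sqrtr_ge0. Qed.

Lemma normc_real (r : R) : normc (r%:C)%C = `|r|.
Proof. by rewrite /= expr0n /= addr0 sqrtr_sqr. Qed.

Lemma ger0_normcE (z : C) : 0 <= z -> ((normc z)%:C)%C = z.
Proof. exact: ger0_norm. Qed.

Lemma dotxx_eq0 n (x : 'cV[C]_n) : dot x x = 0 -> x = 0.
Proof.
rewrite /dot => /eqP; rewrite psumr_eq0 => [/allP x0|k _]; last first.
  by rewrite mulrC -normCK exprn_ge0.
apply/matrixP => k j; rewrite (ord1 j) mxE; apply/eqP.
by have := x0 k (mem_index_enum _); rewrite mulrC -normCK expf_eq0 /= normr_eq0.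
Qed.

Lemma hpsd_cauchy_schwarz n (M : 'M[C]_n) x y : hpsd M ->
  `|dot x (M *m y)| ^+ 2 <= dot x (M *m x) * dot y (M *m y).
Proof.
move=> hM; have psd z := hpsd_dot_ge0 z hM.
set p := dot x (M *m x); set q := dot y (M *m y); set z := dot x (M *m y).
have zC : dot y (M *m x) = z^* by rewrite dot_mulmxr hM.1 dotC.
have key t : 0 <= p + t * z + t^* * z^* + t^* * t * q.
  have := psd (x + t *: y).
  by rewrite mulmxDr -scalemxAr !dotDl !dotDr !dotZl !dotZr zC !addrA mulrA.
rewrite normCK; have [q0|q_gt0] := eqVneq q 0.
  have [->|z_neq0] := eqVneq z 0; first by rewrite mul0r q0 mulr0.
  have zz_gt0 : 0 < z * z^* by rewrite -normCK exprn_gt0 // normr_gt0.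
  pose c := (p + 1) / (z * z^*).
  have cC : c^* = c by apply/conj_ge0/divr_ge0; [exact: addr_ge0 (psd x) ler01 | exact: ltW].
  have := key (- c * z^*).
  rewrite q0 mulr0 addr0 rmorphM rmorphN /= conjCK cC.
  have -> : p + - c * z^* * z + - c * z * z^* = p - 2 * (c * (z * z^*)) by ring.
  rewrite /c -mulrA mulVf ?gt_eqF // mulr1.
  have -> : p - 2 * (p + 1) = - (p + 2) by ring.
  by rewrite oppr_ge0 => /(lt_le_trans (ltr_wpDl (psd x) (ltr0Sn _ 1))); rewrite ltxx.
have {q_gt0}q_gt0 : 0 < q by rewrite lt_def q_gt0 psd.
have qC : q^* = q by apply/conj_ge0/ltW.
have := key (- z^* / q).
rewrite rmorphM rmorphN /= conjCK rmorphV /= ?qC ?unitfE ?gt_eqF //.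
have -> : p + - z^* / q * z + - z / q * z^* + - z / q * (- z^* / q) * q
          = p - z * z^* / q by field; rewrite gt_eqF.
by rewrite subr_ge0 ler_pdivrMr // mulrC.
Qed.

Lemma normc_dot_le n (x y : 'cV[C]_n) : normc (dot x y) <= vnorm x * vnorm y.
Proof.
have := hpsd_cauchy_schwarz x y (hpsd1 n).
rewrite !mul1mx -!sqr_vnormC normcE -!rmorphXn -rmorphM /= lecR.
by rewrite -exprMn ler_pXn2r ?nnegrE ?mulr_ge0 ?vnorm_ge0 ?normc_ge0.
Qed.

Lemma vnorm_sqr_inj n (x : 'cV[C]_n) r :
  0 <= r -> ((r ^+ 2)%:C)%C = dot x x -> vnorm x = r.
Proof.
move=> r0 e; apply/eqP; rewrite -(eqrXn2 (_ : 0 < 2)%N) ?vnorm_ge0 //.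
by apply/eqP/complexI; rewrite sqr_vnormC e.
Qed.

Lemma vnormZ n a (x : 'cV[C]_n) : vnorm (a *: x) = normc a * vnorm x.
Proof.
apply: vnorm_sqr_inj; first by rewrite mulr_ge0 ?vnorm_ge0 ?normc_ge0.
by rewrite dotZl dotZr exprMn rmorphM /= sqr_vnormC rmorphXn /= -normcE normCKC mulrA.
Qed.

Lemma vnorm0 n : vnorm (0 : 'cV[C]_n) = 0.
Proof. by rewrite -(scale0r (0 : 'cV[C]_n)) vnormZ normc_real normr0 mul0r. Qed.

Lemma vnormN n (x : 'cV[C]_n) : vnorm (- x) = vnorm x.
Proof. by rewrite -scaleN1r vnormZ -(rmorphN1 (@real_complex R)) normc_real normrN1 mul1r. Qed.

Lemma vnorm_eq0 n (x : 'cV[C]_n) : vnorm x = 0 -> x = 0.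
Proof. by move=> x0; apply: dotxx_eq0; rewrite -sqr_vnormC x0 expr0n. Qed.

Lemma vnormD n (x y : 'cV[C]_n) : vnorm (x + y) <= vnorm x + vnorm y.
Proof.
rewrite -(ler_pXn2r (_ : 0 < 2)%N) ?nnegrE ?addr_ge0 ?vnorm_ge0 //.
rewrite -lecR sqr_vnormC !dotDl !dotDr (dotC x y) sqrrD !rmorphD /= !sqr_vnormC.
set w := dot x y; set k := ((vnorm x * vnorm y)%:C)%C.
have w_le : `|w| <= k by rewrite normcE lecR normc_dot_le.
have re_real : w + w^* \is Num.real by rewrite CrealE rmorphD /= conjCK addrC.
have -> : dot x x + w + (w^* + dot y y) = dot x x + (w + w^*) + dot y y by ring.
rewrite lerD2r lerD2l; apply: le_trans (real_ler_norm re_real) _.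
by apply: le_trans (ler_normD _ _) _; rewrite norm_conjC lerD.
Qed.

Lemma vnormB n (x y : 'cV[C]_n) : vnorm (x - y) <= vnorm x + vnorm y.
Proof. by rewrite -(vnormN y) vnormD. Qed.

Lemma saddle_energy_le n1 n2 (A1 : 'M[C]_n1) (C1 : 'M[C]_n2) (T : 'M[C]_(n1, n2))
    (a f : 'cV[C]_n1) (c g : 'cV[C]_n2) (lam : R) :
  hpsd A1 -> hpsd C1 ->
  A1 *m a + T *m c = (lam%:C)%C *: f -> ctrmx T *m a - C1 *m c = (lam%:C)%C *: g ->
  normc (dot a (A1 *m a)) + normc (dot c (C1 *m c)) <=
    `|lam| * (vnorm a * vnorm f + vnorm c * vnorm g).
Proof.
move=> hA hC e1 e2.
set P := dot a (A1 *m a); set Q := dot c (C1 *m c); set z := dot a (T *m c).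
set l := (lam%:C)%C; set u := dot a f - dot c g.
have P_ge0 : 0 <= P := hpsd_dot_ge0 a hA.
have Q_ge0 : 0 <= Q := hpsd_dot_ge0 c hC.
(* z - z^* is purely imaginary: adding the conjugate identity cancels it *)
have energy : P + Q + (z - z^*) = l * u.
  have h1 : P + z = l * dot a f by rewrite -dotDr e1 dotZr.
  have h2 : z^* - Q = l * dot c g.
    by rewrite -dotC -[T]ctrmxK -dot_mulmxr -dotNr -dotDr e2 dotZr.
  by rewrite mulrBr -h1 -h2; ring.
have energyC : P + Q + (z^* - z) = l * u^*.
  have := congr1 Num.conj energy.
  rewrite !rmorphD rmorphN rmorphM /= conj_real conjCK (conj_ge0 P_ge0) (conj_ge0 Q_ge0).
  by move=> ->; rewrite rmorphD.
have twice : 2 * (P + Q) = l * (u + u^*).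
  by rewrite [RHS]mulrDr -energy -energyC; ring.
have u_le : `|u| <= ((vnorm a * vnorm f + vnorm c * vnorm g)%:C)%C.
  apply: le_trans (ler_normB _ _) _; rewrite rmorphD /=.
  by apply: lerD; rewrite normcE lecR normc_dot_le.
have : 2 * (P + Q) <= 2 * (`|l| * `|u|).
  rewrite -[X in X <= _]ger0_norm ?mulr_ge0 ?addr_ge0 ?ler0n // twice normrM mulrCA.
  rewrite ler_wpM2l // mulr2n mulrDl mul1r; apply: le_trans (ler_normD _ _) _.
  by rewrite norm_conjC.
rewrite ler_pM2l ?ltr0n // => PQ_le.
rewrite -lecR rmorphD rmorphM /= -!normcE (ger0_norm P_ge0) (ger0_norm Q_ge0).
apply: le_trans PQ_le _; rewrite [`|l|]normcE normc_real.
by apply: ler_wpM2l; rewrite // lecR.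
Qed.

End InnerProduct.

Section SpectralNorm.
Variable R : realType.
Local Notation C := R[i].
Local Notation normc := (@ComplexField.Normc.normc R).

Lemma specnorm_has_ubound m n (M : 'M[C]_(m, n)) :
  has_ubound [set vnorm (M *m x) | x in [set x : 'cV[C]_n | vnorm x = 1]].
Proof.
exists (\sum_i vnorm (ctrmx (row i M)) ^+ 2 + 1) => _ [x /= x1 <-].
have sqr_le : vnorm (M *m x) ^+ 2 <= \sum_i vnorm (ctrmx (row i M)) ^+ 2.
  rewrite -lecR sqr_vnormC rmorph_sum /dot; apply: ler_sum => i _.
  have -> : (M *m x) i ord0 = dot (ctrmx (row i M)) x.
    by rewrite mxE /dot; apply: eq_bigr => k _; rewrite !mxE conjCK.
  rewrite mulrC -normCK normcE -rmorphXn lecR ler_pXn2r ?nnegrE ?normc_ge0 ?vnorm_ge0 //.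
  by rewrite -[vnorm _]mulr1 -x1 normc_dot_le.
have le_sqrD1 (t : R) : t <= t ^+ 2 + 1 by nra.
by apply: le_trans (le_sqrD1 _) _; rewrite lerD2r.
Qed.

Lemma specnorm_ge0 m n (M : 'M[C]_(m, n)) : 0 <= specnorm M.
Proof.
rewrite /specnorm; set E := (X in sup X).
have [[y Ey]|nE] := pselect (exists y, E y).
  apply: le_trans (ub_le_sup (specnorm_has_ubound M) Ey).
  by case: Ey => x _ <-; apply: vnorm_ge0.
suff -> : E = set0 by rewrite sup0.
by apply/seteqP; split => // y Ey; apply: nE; exists y.
Qed.

Lemma vnorm_mulmx_le m n (M : 'M[C]_(m, n)) (x : 'cV[C]_n) :
  vnorm (M *m x) <= specnorm M * vnorm x.
Proof.
have [x0|x_neq0] := eqVneq (vnorm x) 0.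
  by rewrite x0 (vnorm_eq0 x0) mulmx0 vnorm0 mulr0.
have x_gt0 : 0 < vnorm x by rewrite lt_def x_neq0 vnorm_ge0.
pose u := ((vnorm x)^-1%:C)%C *: x.
have normcV : normc ((vnorm x)^-1%:C)%C = (vnorm x)^-1.
  by rewrite normc_real gtr0_norm ?invr_gt0.
have u1 : vnorm u = 1 by rewrite /u vnormZ normcV mulVf ?gt_eqF.
have := ub_le_sup (specnorm_has_ubound M) (ex_intro2 _ _ u u1 erefl).
by rewrite /u -scalemxAr vnormZ normcV mulrC ler_pdivrMr.
Qed.

Lemma vnorm_ctrmx_mulmx_le m n (M : 'M[C]_(m, n)) (x : 'cV[C]_m) :
  vnorm (ctrmx M *m x) <= specnorm M * vnorm x.
Proof.
set y := ctrmx M *m x.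
have sqr_le : vnorm y ^+ 2 <= specnorm M * vnorm x * vnorm y.
  have -> : vnorm y ^+ 2 = normc (dot x (M *m y)).
    by rewrite dot_mulmxr -sqr_vnormC normc_real ger0_norm // sqr_ge0.
  apply: le_trans (normc_dot_le _ _) _; rewrite [specnorm M * _]mulrC -mulrA.
  by rewrite ler_wpM2l ?vnorm_ge0 ?vnorm_mulmx_le.
have [y0|y_neq0] := eqVneq (vnorm y) 0.
  by rewrite y0 mulr_ge0 ?specnorm_ge0 ?vnorm_ge0.
by rewrite expr2 ler_pM2r ?lt_def ?y_neq0 ?vnorm_ge0 in sqr_le.
Qed.

Lemma vnorm_mulmx_leW m n (M : 'M[C]_(m, n)) x k :
  specnorm M <= k -> vnorm (M *m x) <= k * vnorm x.
Proof. by move=> le_k; apply: le_trans (vnorm_mulmx_le M x) _; rewrite ler_wpM2r ?vnorm_ge0. Qed.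

Lemma vnorm_ctrmx_mulmx_leW m n (M : 'M[C]_(m, n)) x k :
  specnorm M <= k -> vnorm (ctrmx M *m x) <= k * vnorm x.
Proof.
by move=> le_k; apply: le_trans (vnorm_ctrmx_mulmx_le M x) _; rewrite ler_wpM2r ?vnorm_ge0.
Qed.

(* Cauchy-Schwarz for the form of M, applied to x and M^-1 x. *)
Lemma hpsd_vnorm_sqr_le n (M : 'M[C]_n) x : hpsd M -> M \in unitmx ->
  vnorm x ^+ 2 <= specnorm (invmx M) * normc (dot x (M *m x)).
Proof.
move=> hM uM; set y := invmx M *m x.
have My : M *m y = x by rewrite /y mulKVmx.
have cs := hpsd_cauchy_schwarz x y hM.
have yx_ge0 : 0 <= dot y x by have := hpsd_dot_ge0 y hM; rewrite My.
rewrite My -sqr_vnormC ger0_norm ?ler0c ?sqr_ge0 // -rmorphXn in cs.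
rewrite -(ger0_normcE (hpsd_dot_ge0 x hM)) -(ger0_normcE yx_ge0) -rmorphM /= lecR in cs.
have yx_le : normc (dot y x) <= specnorm (invmx M) * vnorm x ^+ 2.
  have -> : normc (dot y x) = normc (dot x y).
    by apply: complexI; rewrite -!normcE dotC norm_conjC.
  apply: le_trans (normc_dot_le _ _) _; rewrite expr2 mulrCA.
  by apply: ler_wpM2l; [exact: vnorm_ge0 | exact: vnorm_mulmx_le].
have [x0|x_neq0] := eqVneq (vnorm x ^+ 2) 0.
  by rewrite x0 mulr_ge0 ?specnorm_ge0 ?normc_ge0.
have := le_trans cs (ler_wpM2l (normc_ge0 _) yx_le).
by rewrite mulrA [_ * specnorm _]mulrC [leLHS]expr2 ler_pM2r // lt_def x_neq0 sqr_ge0.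
Qed.

End SpectralNorm.

Section ScalarEstimates.
Variable R : realFieldType.

Lemma sumsqr_le_of_le_dot (t a c f g : R) :
  0 <= t -> 0 <= a -> 0 <= c -> 0 <= f -> 0 <= g ->
  a ^+ 2 + c ^+ 2 <= t * (a * f + c * g) ->
  a ^+ 2 + c ^+ 2 <= t ^+ 2 * (f ^+ 2 + g ^+ 2).
Proof.
move=> t0 a0 c0 f0 g0 le_dot; set p := a ^+ 2 + c ^+ 2.
have p0 : 0 <= p by rewrite addr_ge0 ?sqr_ge0.
have cs : (a * f + c * g) ^+ 2 <= p * (f ^+ 2 + g ^+ 2).
  by have := sqr_ge0 (a * g - c * f); rewrite /p; nra.
have [->|p_neq0] := eqVneq p 0; first nra.
have dot_ge0 : 0 <= a * f + c * g by rewrite addr_ge0 ?mulr_ge0.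
have : p ^+ 2 <= (t * (a * f + c * g)) ^+ 2.
  by rewrite ler_pXn2r ?nnegrE ?mulr_ge0.
rewrite exprMn => /le_trans /(_ (ler_wpM2l (sqr_ge0 t) cs)).
by rewrite expr2 mulrCA ler_pM2l // lt_def p_neq0.
Qed.

Lemma sumsqr_shift_le (y w w' x x' z z' : R) :
  0 <= y -> 0 <= w -> 0 <= w' -> 0 <= x -> 0 <= x' -> 0 <= z -> 0 <= z' ->
  w <= x + y * z -> w' <= x' + y * z' ->
  w ^+ 2 + w' ^+ 2 + (z ^+ 2 + z' ^+ 2) <=
    (1 + y) ^+ 2 * (x ^+ 2 + x' ^+ 2 + (z ^+ 2 + z' ^+ 2)).
Proof.
move=> y0 w0 w'0 x0 x'0 z0 z'0 le_w le_w'.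
have le_w2 : w ^+ 2 <= (x + y * z) ^+ 2 by nra.
have le_w'2 : w' ^+ 2 <= (x' + y * z') ^+ 2 by nra.
have am_gm : y * (2 * (x * z + x' * z')) <= y * (x ^+ 2 + z ^+ 2 + x' ^+ 2 + z' ^+ 2).
  by apply: ler_wpM2l => //; have := sqr_ge0 (x - z); have := sqr_ge0 (x' - z'); nra.
have sqr_term : 0 <= y ^+ 2 * (x ^+ 2 + x' ^+ 2) by nra.
nra.
Qed.

Lemma mulr_lt1_of_lt_inv (k x : R) : 0 <= k -> x < 1 / k -> x * k < 1.
Proof.
rewrite le_eqVlt => /predU1P [<-|k_gt0]; first by rewrite mulr0 ltr01.
by rewrite ltr_pdivlMr.
Qed.

(* With P = |(a, c)|^2 and Q = |(b', d')|^2 the hypotheses give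
   P + Q <= (t (1 + y)^2)^2 (P + Q). *)
Lemma saddle_estimates_eq0 (t y a b c d b' d' f g : R) :
  0 <= t -> 0 <= y -> 0 <= a -> 0 <= b -> 0 <= c -> 0 <= d ->
  0 <= b' -> 0 <= d' -> 0 <= f -> 0 <= g ->
  f <= a + y * b -> g <= c + y * d -> b <= b' + y * a -> d <= d' + y * c ->
  a ^+ 2 + c ^+ 2 <= t * (a * f + c * g) -> b' <= t * d -> d' <= t * b ->
  t * (1 + y) ^+ 2 < 1 ->
  [/\ a = 0, b = 0, c = 0 & d = 0].
Proof.
move=> t0 y0 a0 b0 c0 d0 b'0 d'0 f0 g0 le_f le_g le_b le_d energy le_b' le_d' small.
have le_P := sumsqr_le_of_le_dot t0 a0 c0 f0 g0 energy.
have le_Q : b' ^+ 2 + d' ^+ 2 <= t ^+ 2 * (b ^+ 2 + d ^+ 2) by nra.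
have le_FD := sumsqr_shift_le y0 f0 g0 a0 c0 b0 d0 le_f le_g.
have le_PD := sumsqr_shift_le y0 b0 d0 b'0 d'0 a0 c0 le_b le_d.
set P := a ^+ 2 + c ^+ 2 in le_P le_FD le_PD; set Q := b' ^+ 2 + d' ^+ 2 in le_Q le_PD.
set k := (1 + y) ^+ 2 in le_FD le_PD small.
have k_ge0 : 0 <= k by rewrite sqr_ge0.
have PQ_ge0 : 0 <= P + Q by rewrite !addr_ge0 ?sqr_ge0.
have contract : P + Q <= (t * k) ^+ 2 * (P + Q).
  have -> : (t * k) ^+ 2 * (P + Q) = t ^+ 2 * (k * (k * (P + Q))) by ring.
  apply: le_trans (_ : t ^+ 2 * (f ^+ 2 + g ^+ 2 + (b ^+ 2 + d ^+ 2)) <= _); first nra.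
  rewrite ler_wpM2l ?sqr_ge0 //; apply: le_trans le_FD _.
  by rewrite ler_wpM2l // addrC [P + _]addrC.
have rho2_lt1 : (t * k) ^+ 2 < 1 by rewrite exprn_ilt1 // mulr_ge0.
have PQ0 : P + Q = 0 by nra.
have [a_eq0 c_eq0 b'_eq0 d'_eq0] : [/\ a = 0, c = 0, b' = 0 & d' = 0].
  by rewrite /P /Q in PQ0; split; nra.
by split=> //; nra.
Qed.

End ScalarEstimates.

Section SaddleElimination.
Variables (R : rcfType) (r s m : nat).
Local Notation C := R[i].
Variables (A1 : 'M[C]_r) (C1 : 'M[C]_s) (B11 : 'M[C]_(r, s)) (B12 : 'M[C]_(r, m))
  (B21 : 'M[C]_(m, s)) (B22 : 'M[C]_m).

(* H w = l w written in the coordinates w = (U1 a + U2 b, V1 c + V2 d) *)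
Definition compressed_eigen (l : C) (a : 'cV[C]_r) (b : 'cV[C]_m) (c : 'cV[C]_s)
    (d : 'cV[C]_m) : Prop := [/\
  A1 *m a + B11 *m c + B12 *m d = l *: a,
  B21 *m c + B22 *m d = l *: b,
  ctrmx B11 *m a + ctrmx B21 *m b - C1 *m c = l *: c &
  ctrmx B12 *m a + ctrmx B22 *m b = l *: d].

Hypothesis uB22 : B22 \in unitmx.

Let X := B12 *m invmx B22.
Let Y := ctrmx B21 *m ctrmx (invmx B22).
Let T := B11 - X *m B21.

Lemma compressed_eigen_schur l a b c d : compressed_eigen l a b c d ->
  [/\ A1 *m a + T *m c = l *: (a - X *m b),
      ctrmx T *m a - C1 *m c = l *: (c - Y *m d),
      ctrmx B22 *m (b + ctrmx X *m a) = l *: d &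
      B22 *m (d + ctrmx Y *m c) = l *: b].
Proof.
case=> E1 E2 E3 E4.
have uB22C : ctrmx B22 \in unitmx by rewrite ctrmx_unit.
have XB22 : X *m B22 = B12 by rewrite mulmxKV.
have YB22C : Y *m ctrmx B22 = ctrmx B21.
  by rewrite -mulmxA -ctrmx_mul mulmxV // ctrmx1 mulmx1.
have XC : ctrmx X = invmx (ctrmx B22) *m ctrmx B12 by rewrite ctrmx_mul ctrmx_inv.
have YC : ctrmx Y = invmx B22 *m B21 by rewrite ctrmx_mul !ctrmxK.
split.
- rewrite scalerBr scalemxAr -E2 -E1 mulmxDr !mulmxA XB22 /T mulmxBl.
  by rewrite opprD addrACA subrr addr0 addrA.
- rewrite scalerBr scalemxAr -E4 -E3 mulmxDr !mulmxA YB22C /T ctrmxD ctrmxN ctrmx_mul XC.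
  rewrite -ctrmx_inv !mulmxA mulmxBl.
  by rewrite /Y (addrAC _ (ctrmx B21 *m b)) opprD addrACA subrr addr0 [RHS]addrAC.
- by rewrite mulmxDr XC -mulmxA mulKVmx // addrC.
- by rewrite mulmxDr YC -mulmxA mulKVmx // addrC.
Qed.

End SaddleElimination.

Section SaddleEstimate.
Variables (R : realType) (r s m : nat).
Local Notation C := R[i].
Local Notation normc := (@ComplexField.Normc.normc R).
Variables (A1 : 'M[C]_r) (C1 : 'M[C]_s) (B11 : 'M[C]_(r, s)) (B12 : 'M[C]_(r, m))
  (B21 : 'M[C]_(m, s)) (B22 : 'M[C]_m).
Hypotheses (pA1 : hpsd A1) (uA1 : A1 \in unitmx) (pC1 : hpsd C1) (uC1 : C1 \in unitmx)
  (uB22 : B22 \in unitmx).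
Variables (alpha gamma : R).
Hypotheses (leA1 : specnorm (invmx A1) <= alpha) (leC1 : specnorm (invmx C1) <= alpha)
  (leB22 : specnorm (invmx B22) <= alpha)
  (leX : specnorm (B12 *m invmx B22) <= gamma)
  (leY : specnorm (ctrmx B21 *m ctrmx (invmx B22)) <= gamma).

Lemma compressed_eigen_small_eq0 (lam : R) a b c d :
  compressed_eigen A1 C1 B11 B12 B21 B22 (lam%:C)%C a b c d ->
  `|lam| * ((1 + gamma) ^+ 2 * alpha) < 1 ->
  [/\ a = 0, b = 0, c = 0 & d = 0].
Proof.
move=> /(compressed_eigen_schur uB22).
set X := B12 *m _; set Y := ctrmx B21 *m _; set T := B11 - _.
set f := a - X *m b; set g := c - Y *m d.
set b' := b + ctrmx X *m a; set d' := d + ctrmx Y *m c.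
move=> [Ef Eg Eb' Ed'] small.
have alpha_ge0 : 0 <= alpha := le_trans (specnorm_ge0 _) leA1.
have gamma_ge0 : 0 <= gamma := le_trans (specnorm_ge0 _) leX.
set t := alpha * `|lam|.
have t_ge0 : 0 <= t by rewrite mulr_ge0.
have le_f : vnorm f <= vnorm a + gamma * vnorm b.
  by apply: le_trans (vnormB _ _) _; rewrite lerD2l vnorm_mulmx_leW.
have le_g : vnorm g <= vnorm c + gamma * vnorm d.
  by apply: le_trans (vnormB _ _) _; rewrite lerD2l vnorm_mulmx_leW.
have le_b : vnorm b <= vnorm b' + gamma * vnorm a.
  by rewrite -[b](addrK (ctrmx X *m a)); apply: le_trans (vnormB _ _) _; rewrite lerD2l vnorm_ctrmx_mulmx_leW.
have le_d : vnorm d <= vnorm d' + gamma * vnorm c.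
  by rewrite -[d](addrK (ctrmx Y *m c)); apply: le_trans (vnormB _ _) _; rewrite lerD2l vnorm_ctrmx_mulmx_leW.
have le_b' : vnorm b' <= t * vnorm d.
  have uB22C : ctrmx B22 \in unitmx by rewrite ctrmx_unit.
  rewrite -[b'](mulKmx uB22C) Eb' -ctrmx_inv.
  by apply: le_trans (vnorm_ctrmx_mulmx_leW _ leB22) _; rewrite vnormZ normc_real mulrA.
have le_d' : vnorm d' <= t * vnorm b.
  rewrite -[d'](mulKmx uB22) Ed'.
  by apply: le_trans (vnorm_mulmx_leW _ leB22) _; rewrite vnormZ normc_real mulrA.
have energy : vnorm a ^+ 2 + vnorm c ^+ 2 <= t * (vnorm a * vnorm f + vnorm c * vnorm g).
  apply: le_trans (lerD (hpsd_vnorm_sqr_le a pA1 uA1) (hpsd_vnorm_sqr_le c pC1 uC1)) _.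
  apply: le_trans (lerD (ler_wpM2r (normc_ge0 _) leA1) (ler_wpM2r (normc_ge0 _) leC1)) _.
  by rewrite -mulrDr /t -mulrA ler_wpM2l // (saddle_energy_le pA1 pC1 Ef Eg).
have small' : t * (1 + gamma) ^+ 2 < 1 by rewrite /t mulrAC mulrC [alpha * _]mulrC.
by case: (saddle_estimates_eq0 t_ge0 gamma_ge0 (vnorm_ge0 a) (vnorm_ge0 b)
    (vnorm_ge0 c) (vnorm_ge0 d) (vnorm_ge0 b') (vnorm_ge0 d') (vnorm_ge0 f)
    (vnorm_ge0 g) le_f le_g le_b le_d energy le_b' le_d' small')
  => /vnorm_eq0 a0 /vnorm_eq0 b0 /vnorm_eq0 c0 /vnorm_eq0 d0.
Qed.

End SaddleEstimate.

Section Compression.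
Variable R : rcfType.

Lemma unitary_row_mx_blocks p r m (U1 : 'M[R[i]]_(p, r)) (U2 : 'M[R[i]]_(p, m)) :
  ctrmx (row_mx U1 U2) *m row_mx U1 U2 = 1%:M ->
  row_mx U1 U2 *m ctrmx (row_mx U1 U2) = 1%:M ->
  [/\ ctrmx U1 *m U1 = 1%:M, ctrmx U1 *m U2 = 0 &
      U1 *m ctrmx U1 + U2 *m ctrmx U2 = 1%:M].
Proof.
rewrite ctrmx_row_mx mul_col_row mul_row_col scalar_mx_block.
by case/eq_block_mx.
Qed.

(* R(A) = R(U1) is orthogonal to R(U2) and A is Hermitian, hence A U2 = 0. *)
Lemma range_basis_compression p r m (A : 'M[R[i]]_p) (U1 : 'M[R[i]]_(p, r))
    (U2 : 'M[R[i]]_(p, m)) :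
  hpsd A -> ctrmx U1 *m U1 = 1%:M -> ctrmx U1 *m U2 = 0 -> (U1^T == A^T)%MS ->
  [/\ A *m U2 = 0, ctrmx U2 *m A = 0, ctrmx U1 *m A *m U1 \in unitmx &
      hpsd (ctrmx U1 *m A *m U1)].
Proof.
move=> [hermA psdA] U1U1 U1U2 /andP[/submxP[D eD] /submxP[E eE]].
have AE : A = U1 *m E^T by rewrite -[A]trmxK eE trmx_mul trmxK.
have U1D : U1 = A *m D^T by rewrite -[U1]trmxK eD trmx_mul trmxK.
have AEC : A = ctrmx E^T *m ctrmx U1 by rewrite -hermA {1}AE ctrmx_mul.
have AU2 : A *m U2 = 0 by rewrite AEC -mulmxA U1U2 mulmx0.
split => //.
- by rewrite -hermA -ctrmx_mul AU2 ctrmx0.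
- have U1A : ctrmx U1 *m A = E^T by rewrite AE mulmxA U1U1 mul1mx.
  have AU1 : A *m U1 = ctrmx E^T by rewrite AEC -mulmxA U1U1 mulmx1.
  have ED : E^T *m D^T = 1%:M.
    by rewrite -U1U1 {2}U1D mulmxA U1A.
  have A1U1 : ctrmx U1 *m A *m U1 *m ctrmx U1 = E^T.
    by rewrite -(mulmxA (ctrmx U1) A U1) AU1 -mulmxA -AEC U1A.
  have A1_inv : ctrmx U1 *m A *m U1 *m (ctrmx U1 *m D^T) = 1%:M.
    by rewrite mulmxA A1U1 ED.
  by case/mulmx1_unit: A1_inv.
- split=> [|y]; first by rewrite !ctrmx_mul ctrmxK hermA mulmxA.
  by have := psdA (U1 *m y); rewrite ctrmx_mul !mulmxA.
Qed.

Lemma block_eigen_compressed p q r s m (A : 'M[R[i]]_p) (C : 'M[R[i]]_q)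
    (B : 'M[R[i]]_(p, q)) (U1 : 'M[R[i]]_(p, r)) (U2 : 'M[R[i]]_(p, m))
    (V1 : 'M[R[i]]_(q, s)) (V2 : 'M[R[i]]_(q, m)) l v1 v2 :
  U1 *m ctrmx U1 + U2 *m ctrmx U2 = 1%:M -> V1 *m ctrmx V1 + V2 *m ctrmx V2 = 1%:M ->
  A *m U2 = 0 -> ctrmx U2 *m A = 0 -> C *m V2 = 0 -> ctrmx V2 *m C = 0 ->
  block_mx A B (ctrmx B) (- C) *m col_mx v1 v2 = l *: col_mx v1 v2 ->
  compressed_eigen (ctrmx U1 *m A *m U1) (ctrmx V1 *m C *m V1)
    (ctrmx U1 *m B *m V1) (ctrmx U1 *m B *m V2) (ctrmx U2 *m B *m V1)
    (ctrmx U2 *m B *m V2) l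
    (ctrmx U1 *m v1) (ctrmx U2 *m v1) (ctrmx V1 *m v2) (ctrmx V2 *m v2).
Proof.
move=> U12 V12 AU2 U2A CV2 V2C.
rewrite mul_block_col scale_col_mx => /eq_col_mx [eq1 eq2].
set a := ctrmx U1 *m v1; set b := ctrmx U2 *m v1.
set c := ctrmx V1 *m v2; set d := ctrmx V2 *m v2.
have v1E : v1 = U1 *m a + U2 *m b by rewrite !mulmxA -mulmxDl U12 mul1mx.
have v2E : v2 = V1 *m c + V2 *m d by rewrite !mulmxA -mulmxDl V12 mul1mx.
have [ha hb hc hd] : [/\ ctrmx U1 *m v1 = a, ctrmx U2 *m v1 = b,
  ctrmx V1 *m v2 = c & ctrmx V2 *m v2 = d] by [].
clearbody a b c d.
split.
- have := congr1 (mulmx (ctrmx U1)) eq1.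
  rewrite mulmxDr -scalemxAr ha {1}v1E v2E !mulmxDr !mulmxA.
  by rewrite -[ctrmx U1 *m A *m U2]mulmxA AU2 mulmx0 mul0mx addr0 -addrA.
- have := congr1 (mulmx (ctrmx U2)) eq1.
  by rewrite mulmxDr -scalemxAr hb v2E !mulmxDr !mulmxA U2A mul0mx add0r.
- have := congr1 (mulmx (ctrmx V1)) eq2.
  rewrite mulmxDr -scalemxAr hc v1E v2E mulNmx mulmxN !mulmxDr !mulmxA.
  rewrite -[ctrmx V1 *m C *m V2]mulmxA CV2 mulmx0 mul0mx addr0.
  by rewrite !ctrmx_mul !ctrmxK !mulmxA.
- have := congr1 (mulmx (ctrmx V2)) eq2.
  rewrite mulmxDr -scalemxAr hd v1E mulNmx mulmxN !mulmxDr !mulmxA V2C mul0mx.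
  by rewrite oppr0 addr0 !ctrmx_mul !ctrmxK !mulmxA.
Qed.

End Compression.

Theorem theorem3p4 (R : realType) (p q r s m : nat)
    (A : 'M[R[i]]_p) (C : 'M[R[i]]_q) (B : 'M[R[i]]_(p, q))
    (U1 : 'M[R[i]]_(p, r)) (U2 : 'M[R[i]]_(p, m))
    (V1 : 'M[R[i]]_(q, s)) (V2 : 'M[R[i]]_(q, m)) :
  hpsd A -> hpsd C ->
  ctrmx (row_mx U1 U2) *m row_mx U1 U2 = 1%:M ->
  row_mx U1 U2 *m ctrmx (row_mx U1 U2) = 1%:M ->
  ctrmx (row_mx V1 V2) *m row_mx V1 V2 = 1%:M ->
  row_mx V1 V2 *m ctrmx (row_mx V1 V2) = 1%:M ->
  (U1^T == A^T)%MS ->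
  (V1^T == C^T)%MS ->
  let A1 := ctrmx U1 *m A *m U1 in
  let C1 := ctrmx V1 *m C *m V1 in
  let B12 := ctrmx U1 *m B *m V2 in
  let B21 := ctrmx U2 *m B *m V1 in
  let B22 := ctrmx U2 *m B *m V2 in
  B22 \in unitmx ->
  let H := block_mx A B (ctrmx B) (- C) in
  let eps : R :=
    1 / ((1 + Num.max (specnorm (B12 *m invmx B22))
                      (specnorm (ctrmx B21 *m ctrmx (invmx B22)))) ^+ 2
         * Num.max (specnorm (invmx A1))
                   (Num.max (specnorm (invmx C1)) (specnorm (invmx B22)))) in
  forall x : R, - eps < x < eps -> ~~ eigenvalue H (x%:C)%C.
Proof.
move=> pA pC hU hU' hV hV' rangeA rangeC A1 C1 B12 B21 B22 uB22 H eps x x_lt.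
have [U1U1 U1U2 U12] := unitary_row_mx_blocks hU hU'.
have [V1V1 V1V2 V12] := unitary_row_mx_blocks hV hV'.
have [AU2 U2A uA1 pA1] := range_basis_compression pA U1U1 U1U2 rangeA.
have [CV2 V2C uC1 pC1] := range_basis_compression pC V1V1 V1V2 rangeC.
apply/negP => /eigenvalueP [v vH v_neq0].
have Hv : H *m ctrmx v = (x%:C)%C *: ctrmx v.
  have hermH : ctrmx H = H by rewrite ctrmx_block_mx ctrmxN pA.1 pC.1 ctrmxK.
  by rewrite -hermH -ctrmx_mul vH ctrmxZ conj_real.
rewrite -[ctrmx v]vsubmxK in Hv.
have le_max_l (a b : R) : a <= Num.max a b by rewrite le_max lexx.
have le_max_r (a b : R) : b <= Num.max a b by rewrite le_max lexx orbT.
move: x_lt; rewrite /eps.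
set gamma := Num.max (specnorm (B12 *m _)) _; set alpha := Num.max (specnorm (invmx A1)) _.
move=> x_lt.
have small : `|x| * ((1 + gamma) ^+ 2 * alpha) < 1.
  apply: mulr_lt1_of_lt_inv; last by rewrite ltr_norml.
  by rewrite mulr_ge0 ?sqr_ge0 // (le_trans (specnorm_ge0 _) (le_max_l _ _)).
have [a0 b0 c0 d0] := compressed_eigen_small_eq0 pA1 uA1 pC1 uC1 uB22 (le_max_l _ _)
  (le_trans (le_max_l _ _) (le_max_r _ _)) (le_trans (le_max_r _ _) (le_max_r _ _))
  (le_max_l _ _) (le_max_r _ _)
  (block_eigen_compressed U12 V12 AU2 U2A CV2 V2C Hv) small.
have v1_eq0 : usubmx (ctrmx v) = 0.
  by rewrite -[usubmx _]mul1mx -U12 mulmxDl -!mulmxA a0 b0 !mulmx0 addr0.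
have v2_eq0 : dsubmx (ctrmx v) = 0.
  by rewrite -[dsubmx _]mul1mx -V12 mulmxDl -!mulmxA c0 d0 !mulmx0 addr0.
by move: v_neq0; rewrite -[v]ctrmxK -[ctrmx v]vsubmxK v1_eq0 v2_eq0 col_mx0 ctrmx0 eqxx.
Qed.
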